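(* For all integers $m\ge 2$, $n\ge 2$ there exist a complete DFA $M$ with $m$ states and a complete DFA $N$ with $n$ states such that every DFA accepting $L(M)^R\cup L(N)$ has at least $2^m\cdot n-n+1$ states. In particular this holds for the following DFAs over $\Sigma=\{a,b,c,d\}$: $M=(\{0,\dots,m-1\},\Sigma,\delta_M,0,\{0\})$ with $\delta_M(0,a)=m-1$, $\delta_M(i,a)=i-1$ for $1\le i\le m-1$; $\delta_M(0,b)=1$, $\delta_M(i,b)=i$ for $1\le i\le m-1$; $\delta_M(0,c)=1$, $\delta_M(1,c)=0$, $\delta_M(j,c)=j$ for $2\le j\le m-1$; $\delta_M(i,d)=i$ for all $i$; and $N=(\{0,\dots,n-1\},\Sigma,\delta_N,0,\{0\})$ with $\delta_N(i,a)=\delta_N(i,b)=\delta_N(i,c)=i$ and $\delta_N(i,d)=i+1\bmod n$ for all $i$.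
   Context: DFAs are complete deterministic finite automata $(Q,\Sigma,\delta,s,F)$; $L(M)$ is the accepted language; $L^R=\{w^R: w\in L\}$ is the reversal of $L$. *)

From mathcomp Require Import all_boot.
Set Implicit Arguments. Unset Strict Implicit. Unset Printing Implicit Defensive.

Record dfa (A : finType) := DFA {
  dstate : finType;
  dtrans : dstate -> A -> dstate;
  dstart : dstate;
  dfinal : pred dstate }.

Definition dtrans_star (A : finType) (M : dfa A) (q : dstate M) (w : seq A) :
  dstate M := foldl (@dtrans A M) q w.

Definition accepts (A : finType) (M : dfa A) (w : seq A) : bool :=
  @dfinal A M (@dtrans_star A M (@dstart A M) w).

Definition revU (A : finType) (M N : dfa A) : pred (seq A) :=
  fun w => accepts M (rev w) || accepts N w.

Definition recognizes (A : finType) (D : dfa A) (L : pred (seq A)) : Prop :=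
  forall w, accepts D w = L w.

(* Alphabet Sigma = {a,b,c,d} encoded as 'I_4 : a = 0, b = 1, c = 2, d = 3. *)
Definition Sigma := 'I_4.

(* State i of the m-state DFA M is the ordinal i : 'I_m.-1.+1 (m >= 2, so
   this type has exactly m elements); inord is only applied to values < m. *)
Definition deltaM_nat (m i : nat) (x : Sigma) : nat :=
  match nat_of_ord x with
  | 0 => if i == 0 then m - 1 else i - 1
  | 1 => if i == 0 then 1 else i
  | 2 => if i == 0 then 1 else if i == 1 then 0 else i
  | _ => i
  end.

Definition dfaM (m : nat) : dfa Sigma :=
  @DFA Sigma 'I_m.-1.+1
    (fun q x => inord (deltaM_nat m q x)) (inord 0) (fun q => val q == 0).

Definition deltaN_nat (n i : nat) (x : Sigma) : nat :=
  match nat_of_ord x with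
  | 3 => (i + 1) %% n
  | _ => i
  end.

Definition dfaN (n : nat) : dfa Sigma :=
  @DFA Sigma 'I_n.-1.+1
    (fun q x => inord (deltaN_nat n q x)) (inord 0) (fun q => val q == 0).

From mathcomp Require Import all_boot all_fingroup.
Set Implicit Arguments. Unset Strict Implicit. Unset Printing Implicit Defensive.

(* A word u leads the minimal DFA of L(M)^R U L(N) to the class of the pair
   (S(u), #_d(u) mod n), where S(u) is the set of states of M from which
   rev u is accepted.  In M the letters a (an m-cycle) and c (the
   transposition (0 1)) generate every permutation of the states, and b
   merges 0 into 1; together they make every subset S(u) occur, while d moves
   only N.  Two pairs are separated by a suffix d^j a^i unless both have
   S(u) = Q, in which case every suffix is accepted: of the 2^m n pairs,
   exactly the n - 1 pairs (Q, k) with k <> 0 collapse onto (Q, 0). *)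

Section TransitionStar.
Variables (A : finType) (M : dfa A).

Lemma dtrans_star_cat (q : dstate M) u w :
  dtrans_star q (u ++ w) = dtrans_star (dtrans_star q u) w.
Proof. exact: foldl_cat. Qed.

Lemma dtrans_star_nseq (q : dstate M) x k :
  dtrans_star q (nseq k x) = iter k (fun p => @dtrans A M p x) q.
Proof. by elim: k q => //= k IHk q; rewrite IHk -iterSr iterS. Qed.

End TransitionStar.

Lemma separated_card_le_states (A I : finType) (D : dfa A) (L : pred (seq A))
    (T : {set I}) (f : I -> seq A) :
  recognizes D L ->
  {in T &, forall p p', (forall w, L (f p ++ w) = L (f p' ++ w)) -> p = p'} ->
  #|T| <= #|dstate D|.
Proof.
move=> recD sepT; pose g p := dtrans_star (dstart D) (f p).
suff /card_in_imset <- : {in T &, injective g} by exact: max_card.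
move=> p p' Tp Tp' eq_g; apply: sepT => // w.
by rewrite -!recD /accepts !dtrans_star_cat -/(g p) eq_g.
Qed.

Section PreservingPermutations.
Variables (T : finType) (R : {set T} -> Prop).

Definition preserves (s : {perm T}) := forall X, R X -> R (s @^-1: X).

Lemma preserves1 : preserves 1.
Proof. by move=> X; congr R; apply/setP=> x; rewrite !inE perm1. Qed.

Lemma preservesM s t : preserves s -> preserves t -> preserves (s * t).
Proof.
move=> Rs Rt X /Rt /Rs; congr R; apply/setP=> x; by rewrite !inE permM.
Qed.

Lemma preservesX s k : preserves s -> preserves (s ^+ k).
Proof.
move=> Rs; elim: k => [|k IHk]; first exact: preserves1.
by rewrite expgS; apply: preservesM.
Qed.

Lemma preservesV s : preserves s -> preserves s^-1.
Proof. by rewrite invg_expg; apply: preservesX. Qed.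

Lemma preservesJ s t : preserves s -> preserves t -> preserves (s ^ t).
Proof.
by move=> Rs Rt; rewrite conjgE; apply: preservesM; [apply: preservesV | apply: preservesM].
Qed.

Lemma preserves_imset s (X : {set T}) : preserves s -> R (s @: X) -> R X.
Proof.
move=> Rs /Rs; congr R; apply/setP=> x; by rewrite !inE mem_imset //; apply: perm_inj.
Qed.

End PreservingPermutations.

Section ReversedLanguage.
Variables (A : finType) (M : dfa A).

Definition rev_states (u : seq A) : {set dstate M} :=
  [set q | dfinal (dtrans_star q (rev u))].

Lemma rev_states_rcons u x :
  rev_states (rcons u x) = [set q | @dtrans A M q x \in rev_states u].
Proof. by apply/setP=> q; rewrite !inE rev_rcons. Qed.

Lemma accepts_rev_cat u w :
  accepts M (rev (u ++ w)) = (dtrans_star (dstart M) (rev w) \in rev_states u).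
Proof. by rewrite /accepts rev_cat dtrans_star_cat inE. Qed.

Definition rev_reachable (X : {set dstate M}) : Prop := exists u, rev_states u = X.

Lemma rev_reachable_letter X x :
  rev_reachable X -> rev_reachable [set q | @dtrans A M q x \in X].
Proof. by case=> u <-; exists (rcons u x); rewrite rev_states_rcons. Qed.

Lemma preserves_letter (s : {perm dstate M}) x :
  (forall q, @dtrans A M q x = s q) -> preserves rev_reachable s.
Proof.
move=> xs X /(rev_reachable_letter x); congr rev_reachable.
by apply/setP=> q; rewrite !inE xs.
Qed.

End ReversedLanguage.

Lemma card_not_setT_or (S K : finType) (k0 : K) :
  #|[set p : {set S} * K | (p.1 != setT) || (p.2 == k0)]| = 2 ^ #|S| * #|K| - #|K| + 1.
Proof.
set T := [set p | _].
have TC : ~: T = setX [set setT] [set~ k0].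
  by apply/setP=> -[X k]; rewrite !inE negb_or negbK.
have := cardsC T; rewrite TC cardsX cards1 cardsC1 mul1n card_prod.
rewrite -[#|{set S}|]cardsT -powersetT card_powerset cardsT.
have K_gt0 : 0 < #|K| by apply/card_gt0P; exists k0.
rewrite -(prednK K_gt0) => /(canRL (addnK _)) ->; rewrite addn1 subnSK //.
by rewrite (leq_trans (ltnSn _)) // leq_pmull // expn_gt0.
Qed.

Lemma modn_addB_eq0 n k k' : k < n -> k' < n -> ((k' + (n - k)) %% n == 0) = (k' == k).
Proof.
move=> lt_kn lt_k'n; rewrite -(modnn n) -{3}(subnKC (ltnW lt_kn)) eqn_modDr.
by rewrite !modn_small.
Qed.

Section IndistinguishablePairs.
Variables (Q : finType) (n : nat).
Hypothesis n_gt1 : 1 < n.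

Definition indist (p p' : {set Q} * 'I_n) :=
  forall q j, (q \in p.1) || ((p.2 + j) %% n == 0) = (q \in p'.1) || ((p'.2 + j) %% n == 0).

Lemma indist_sym p p' : indist p p' -> indist p' p.
Proof. by move=> sep q j; rewrite sep. Qed.

Lemma indist_setT p p' : indist p p' -> p.2 != p'.2 :> nat -> p'.1 = setT.
Proof.
move=> sep neq_k; apply/setP=> q; have := sep q (n - p.2).
rewrite subnKC ?modnn ?orbT ?modn_addB_eq0 // 1?ltnW //.
by rewrite eq_sym (negbTE neq_k) orbF inE.
Qed.

Lemma indist_eq (p p' : {set Q} * 'I_n) :
  (p.1 != setT) || (p.2 == 0 :> nat) -> (p'.1 != setT) || (p'.2 == 0 :> nat) ->
  indist p p' -> p = p'.
Proof.
case: p p' => [X k] [X' k'] /= Tp Tp' sep.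
have eq_k : k = k' :> nat.
  apply/eqP/negP => /negP neq_k.
  have /= X'T := indist_setT sep neq_k.
  have /= XT : X = setT by apply: indist_setT (indist_sym sep) _; rewrite eq_sym.
  move: Tp Tp'; rewrite XT X'T eqxx /=.
  by move=> /eqP k0 /eqP k'0; rewrite k0 k'0 in neq_k.
congr pair; last exact: val_inj.
apply/setP=> q; have := sep q (n - k).+1.
by rewrite -eq_k addnS subnKC 1?ltnW // -addn1 modnDl modn_small // !orbF.
Qed.

End IndistinguishablePairs.

Definition la : Sigma := @Ordinal 4 0 isT.
Definition lb : Sigma := @Ordinal 4 1 isT.
Definition lc : Sigma := @Ordinal 4 2 isT.
Definition ld : Sigma := @Ordinal 4 3 isT.

Section DfaM.
Variable m' : nat.
Local Notation m := m'.+2.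
Local Notation M := (dfaM m).
Local Notation Q := 'I_m.
Local Notation stepM := (@dtrans Sigma M).
Local Notation starM := (@dtrans_star Sigma M).
Local Notation q1 := (inord 1 : Q).
Local Notation reach := (@rev_reachable Sigma M).

Lemma inord0 : inord 0 = ord0 :> Q.
Proof. by apply: val_inj; rewrite /= inordK. Qed.

Lemma stepM_val (q : Q) x : val (stepM q x) = deltaM_nat m q x.
Proof.
rewrite /= inordK //; case: x => [[|[|[|[|k]]]] lt_x4] //=.
all: by case: q => [[|[|i]] lt_im]; rewrite /deltaM_nat //= ltnW.
Qed.

Lemma q1_neq0 : q1 != ord0.
Proof. by rewrite -val_eqE /= inordK. Qed.

Lemma stepM_a (q : Q) : stepM q la = ord_pred q.
Proof.
apply: val_inj; rewrite stepM_val /deltaM_nat /=.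
case: q => [[|i] lt_im] /=; first by rewrite modn_small.
by rewrite subn1 modnDr modn_small // ltnW.
Qed.

Lemma stepM_b (q : Q) : stepM q lb = if q == ord0 then q1 else q.
Proof.
by apply: val_inj; rewrite stepM_val /deltaM_nat /= -val_eqE /=; case: ifP; rewrite ?inordK.
Qed.

Lemma stepM_c (q : Q) : stepM q lc = tperm ord0 q1 q.
Proof.
apply: val_inj; rewrite stepM_val /deltaM_nat /=.
case: tpermP => [->|->|/eqP q_neq0 /eqP q_neq1]; rewrite /= ?inordK //.
by move: q_neq0 q_neq1; rewrite -!val_eqE /= inordK // => /negbTE-> /negbTE->.
Qed.

Lemma stepM_d (q : Q) : stepM q ld = q.
Proof. by apply: val_inj; rewrite stepM_val. Qed.

Definition shift : {perm Q} := perm (@ordS_inj m).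

Lemma stepM_a_shift (q : Q) : stepM q la = (shift^-1)%g q.
Proof. by apply: (@perm_inj _ shift); rewrite permKV permE stepM_a ord_predK. Qed.

Lemma shift_inord k : k.+1 < m -> shift (inord k) = inord k.+1.
Proof. by move=> lt_k1m; apply: val_inj; rewrite permE /= !inordK ?modn_small // ltnW. Qed.

Lemma preserves_shift : preserves reach shift.
Proof.
rewrite -[shift]invgK; apply: preservesV.
exact: (@preserves_letter _ M _ la) stepM_a_shift.
Qed.

Lemma preserves_tperm01 : preserves reach (tperm ord0 q1).
Proof. exact: (@preserves_letter _ M _ lc) stepM_c. Qed.

Lemma preserves_tperm0 (y : Q) : preserves reach (tperm ord0 y).
Proof.
rewrite -[y]inord_val; elim: (val y) (ltn_ord y) => [|k IHk] lt_k1m.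
  by rewrite inord0 tperm1; apply: preserves1.
case: k IHk lt_k1m => [|k] IHk lt_k2m; first exact: preserves_tperm01.
(* (0, k+1) conjugated by the shift is (1, k+2), and then by (0, 1) it is (0, k+2). *)
have -> : tperm ord0 (inord k.+2) = ((tperm ord0 (inord k.+1) ^ shift) ^ tperm ord0 q1)%g.
  by rewrite !tpermJ -inord0 !shift_inord // tpermR tpermD // -val_eqE /= !inordK.
apply: preservesJ preserves_tperm01; apply: preservesJ preserves_shift.
exact/IHk/ltnW.
Qed.

Lemma preserves_tperm1 (y : Q) : preserves reach (tperm q1 y).
Proof.
have [-> | y_neq0] := eqVneq y ord0; first by rewrite tpermC; exact: preserves_tperm01.
have [-> | y_neq1] := eqVneq y q1; first by rewrite tperm1; exact: preserves1.
have -> : tperm q1 y = (tperm ord0 y ^ tperm ord0 q1)%g.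
  by rewrite tpermJ tpermL tpermD // eq_sym.
exact: preservesJ (preserves_tperm0 y) preserves_tperm01.
Qed.

Lemma preserves_to01 (x y : Q) :
  x != y -> exists2 s, preserves reach s & s x = ord0 /\ s y = q1.
Proof.
move=> neq_xy; pose y' := tperm ord0 x y.
have y'_neq0 : y' != ord0 by rewrite (canF_eq (tpermK _ _)) tpermL eq_sym.
exists (tperm ord0 x * tperm q1 y')%g.
  exact: preservesM (preserves_tperm0 x) (preserves_tperm1 y').
by rewrite !permM tpermR -/y' tpermR tpermD // q1_neq0.
Qed.

Lemma starM_d (q : Q) k : starM q (nseq k ld) = q.
Proof. by rewrite dtrans_star_nseq iter_fix // stepM_d. Qed.

Lemma rev_statesM_cat_d u k : rev_states M (u ++ nseq k ld) = rev_states M u.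
Proof. by apply/setP=> q; rewrite !inE rev_cat rev_nseq dtrans_star_cat starM_d. Qed.

Lemma starM_a_val j : j < m -> val (starM ord0 (nseq j.+1 la)) = m - j.+1.
Proof.
rewrite dtrans_star_nseq; elim: j => [|j IHj] lt_j1m; rewrite iterS stepM_val //.
rewrite /deltaM_nat /= IHj ?(ltnW lt_j1m) // subn_eq0 leqNgt lt_j1m.
by rewrite /= subn1 -subnS.
Qed.

Lemma starM_a_onto (q : Q) : exists j, starM ord0 (nseq j la) = q.
Proof.
case: q => [[|i] lt_im]; first by exists 0; apply: val_inj.
exists (m - i.+1); apply: val_inj; rewrite -(subnSK lt_im) starM_a_val.
  by rewrite subnSK // subKn // ltnW.
by rewrite ltn_subrL.
Qed.

Lemma rev_statesM_nil : rev_states M [::] = [set ord0].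
Proof. by apply/setP=> q; rewrite !inE -val_eqE. Qed.

Lemma rev_statesM_b : rev_states M [:: lb] = set0.
Proof.
apply/setP=> q; rewrite !inE; change ((val (stepM q lb) == 0) = false).
by rewrite stepM_b; case: ifP => [_ | <-] //=; rewrite inordK.
Qed.

Lemma rev_reachable_setU0 (Z : {set Q}) : q1 \in Z -> reach Z -> reach (ord0 |: Z).
Proof.
move=> Z1 /(@rev_reachable_letter _ M _ lb); congr reach.
by apply/setP=> q; rewrite !inE stepM_b; case: eqP => // ->.
Qed.

Lemma rev_reachable_card k (X : {set Q}) : #|X| = k.+1 -> reach X.
Proof.
elim: k X => [|k IHk] X.
  move=> /eqP/cards1P[x ->]; apply: preserves_imset (preserves_tperm0 x) _.
  by rewrite imset_set1 tpermR; exists [::]; exact: rev_statesM_nil.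
(* Send two points of X to 0 and 1, remove 0 and restore it by reading b. *)
move=> cardX; have [x Xx] : exists x, x \in X by apply/card_gt0P; rewrite cardX.
have cardXx : #|X :\ x| = k.+1 by apply/succn_inj; rewrite -cardX (cardsD1 x X) Xx.
have [y] : exists y, y \in X :\ x by apply/card_gt0P; rewrite cardXx.
rewrite !inE => /andP[neq_yx Xy].
have [s Rs [sy sx]] := preserves_to01 neq_yx.
have mem_sX z : (s z \in s @: X) = (z \in X) by apply/mem_imset/perm_inj.
apply: preserves_imset Rs _.
rewrite -(setD1K (_ : ord0 \in s @: X)); last by rewrite -sy mem_sX.
apply: rev_reachable_setU0; first by rewrite !inE q1_neq0 -sx mem_sX.
apply: IHk; apply/succn_inj; rewrite -cardX -(card_imset X (@perm_inj _ s)).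
by rewrite (cardsD1 ord0 (s @: X)) -sy mem_sX Xy.
Qed.

Lemma rev_reachable_all (X : {set Q}) : reach X.
Proof.
case: (set_0Vmem X) => [-> | [x Xx]]; first by exists [:: lb]; exact: rev_statesM_b.
by apply: (@rev_reachable_card #|X|.-1); rewrite prednK //; apply/card_gt0P; exists x.
Qed.

End DfaM.

Section DfaN.
Variable n' : nat.
Local Notation n := n'.+2.
Local Notation N := (dfaN n).

Lemma starN_val (q : 'I_n) w :
  val (@dtrans_star Sigma N q w) = (q + count_mem ld w) %% n.
Proof.
elim: w q => [|x w IHw] q /=; first by rewrite addn0 modn_small.
rewrite IHw /= inordK; last first.
  by case: x => [[|[|[|[|k]]]] lt_x4]; rewrite /deltaN_nat //= ltn_pmod.
rewrite addnA; case: x => [[|[|[|[|k]]]] lt_x4]; rewrite /deltaN_nat //= ?addn0 //.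
by rewrite modnDml addn1.
Qed.

Lemma acceptsN w : accepts N w = (count_mem ld w %% n == 0).
Proof. by rewrite /accepts /= starN_val inordK. Qed.

End DfaN.

Section LowerBound.
Variables m' n' : nat.
Local Notation m := m'.+2.
Local Notation n := n'.+2.
Local Notation M := (dfaM m).
Local Notation N := (dfaN n).

Lemma revU_MN_cat u w : revU M N (u ++ w) =
  (@dtrans_star Sigma M ord0 (rev w) \in rev_states M u)
  || ((count_mem ld u + count_mem ld w) %% n == 0).
Proof. by rewrite /revU accepts_rev_cat acceptsN count_cat /= inord0. Qed.

Lemma exists_rev_states_count (X : {set 'I_m}) (k : 'I_n) :
  exists u, (rev_states M u == X) && (count_mem ld u %% n == k).
Proof.
have [u <-] := rev_reachable_all X.
exists (u ++ nseq (k + n'.+1 * count_mem ld u) ld).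
rewrite rev_statesM_cat_d eqxx count_cat count_nseq /= mul1n addnCA -mulSn.
by rewrite (addnC k) (mulnC n) modnMDl modn_small.
Qed.

Lemma dfaMN_lower_bound (D : dfa Sigma) :
  recognizes D (revU M N) -> 2 ^ m * n - n + 1 <= #|dstate D|.
Proof.
move=> recD; pose word p := xchoose (exists_rev_states_count p.1 p.2).
have word_spec p : (rev_states M (word p) == p.1) && (count_mem ld (word p) %% n == p.2).
  exact: (xchooseP (exists_rev_states_count p.1 p.2)).
rewrite -{1}(card_ord m) -{1 2}(card_ord n) -(card_not_setT_or _ (ord0 : 'I_n)).
apply: (separated_card_le_states (f := word) recD) => p p'; rewrite !inE => Tp Tp' eqL.
apply: (indist_eq _ Tp Tp') => // q j; have [i <-] := starM_a_onto q.
have := eqL (nseq j ld ++ nseq i la); rewrite !revU_MN_cat rev_cat !rev_nseq.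
rewrite dtrans_star_cat starM_d !count_cat !count_nseq /= mul1n mul0n addn0.
by rewrite -modnDml -[in RHS]modnDml; case/andP: (word_spec p) => /eqP-> /eqP->;
  case/andP: (word_spec p') => /eqP-> /eqP->.
Qed.

End LowerBound.

Theorem theorem8 (m n : nat) (hm : 2 <= m) (hn : 2 <= n) :
  (exists (A : finType) (M N : dfa A),
      #|dstate M| = m /\ #|dstate N| = n /\
      forall D : dfa A, recognizes D (revU M N) ->
        2 ^ m * n - n + 1 <= #|dstate D|)
  /\
  (#|dstate (dfaM m)| = m /\ #|dstate (dfaN n)| = n /\
   forall D : dfa Sigma, recognizes D (revU (dfaM m) (dfaN n)) ->
     2 ^ m * n - n + 1 <= #|dstate D|).
Proof.
case: m hm => [|[|m']] // _; case: n hn => [|[|n']] // _.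
have dfaMN_spec := conj (card_ord m'.+2) (conj (card_ord n'.+2) (@dfaMN_lower_bound m' n')).
by split=> //; exists Sigma, (dfaM m'.+2), (dfaN n'.+2).
Qed.
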